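(* Let $(X,d)$ be a compact metric space with a nonatomic Borel probability measure $\mu$, and let $T$ be an invertible ergodic measure-preserving transformation of $(X,\mu)$. If $T$ is uniformly rigid along a strictly increasing sequence $\{n_k\}$ of natural numbers, then $\{n_k\}$ has density zero, i.e. $\lim_{N\to\infty}\frac{1}{N}\#\{k: n_k\le N\}=0$.
   Context: $T$ is uniformly rigid along $\{n_k\}$ if $\sup_{x\in X} d(T^{n_k}x,x)\to 0$ as $k\to\infty$. *)

From Stdlib Require Import Reals Lra List.
Open Scope R_scope.

Definition is_metric {X : Type} (d : X -> X -> R) : Prop :=
  (forall x y, 0 <= d x y) /\
  (forall x y, d x y = 0 <-> x = y) /\
  (forall x y, d x y = d y x) /\
  (forall x y z, d x z <= d x y + d y z).

Definition open_set {X : Type} (d : X -> X -> R) (U : X -> Prop) : Prop :=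
  forall x, U x -> exists r, 0 < r /\ forall y, d x y < r -> U y.

Definition compact_space {X : Type} (d : X -> X -> R) : Prop :=
  forall (I : Type) (U : I -> X -> Prop),
    (forall i, open_set d (U i)) ->
    (forall x, exists i, U i x) ->
    exists l : list I, forall x, exists i, In i l /\ U i x.

Definition sigma_algebra {X : Type} (S : (X -> Prop) -> Prop) : Prop :=
  S (fun _ => True) /\
  (forall A, S A -> S (fun x => ~ A x)) /\
  (forall A : nat -> X -> Prop, (forall n, S (A n)) -> S (fun x => exists n, A n x)).

Definition borel {X : Type} (d : X -> X -> R) (A : X -> Prop) : Prop :=
  forall S : (X -> Prop) -> Prop, sigma_algebra S ->
    (forall U, open_set d U -> S U) -> S A.

(** Borel probability measure (set function defined on all predicates, but
    only its values on Borel sets matter). *)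
Definition borel_prob_measure {X : Type} (d : X -> X -> R)
    (mu : (X -> Prop) -> R) : Prop :=
  (forall A, borel d A -> 0 <= mu A) /\
  mu (fun _ => True) = 1 /\
  (forall A : nat -> X -> Prop,
     (forall n, borel d (A n)) ->
     (forall n m x, n <> m -> A n x -> A m x -> False) ->
     infinite_sum (fun n => mu (A n)) (mu (fun x => exists n, A n x))).

Definition nonatomic {X : Type} (mu : (X -> Prop) -> R) : Prop :=
  forall x0 : X, mu (fun x => x = x0) = 0.

Definition measurable_map {X : Type} (d : X -> X -> R) (T : X -> X) : Prop :=
  forall A, borel d A -> borel d (fun x => A (T x)).

Definition measure_preserving {X : Type} (d : X -> X -> R)
    (mu : (X -> Prop) -> R) (T : X -> X) : Prop :=
  measurable_map d T /\ forall A, borel d A -> mu (fun x => A (T x)) = mu A.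

Definition invertible_mpt {X : Type} (d : X -> X -> R)
    (mu : (X -> Prop) -> R) (T : X -> X) : Prop :=
  measure_preserving d mu T /\
  exists S : X -> X, (forall x, S (T x) = x) /\ (forall x, T (S x) = x) /\
    measure_preserving d mu S.

Definition ergodic {X : Type} (d : X -> X -> R)
    (mu : (X -> Prop) -> R) (T : X -> X) : Prop :=
  forall A, borel d A -> (forall x, A (T x) <-> A x) -> mu A = 0 \/ mu A = 1.

Definition uniformly_rigid {X : Type} (d : X -> X -> R) (T : X -> X)
    (n : nat -> nat) : Prop :=
  forall eps, 0 < eps -> exists K, forall k, (K <= k)%nat ->
    forall x, d (Nat.iter (n k) T x) x <= eps.

Definition strictly_increasing (n : nat -> nat) : Prop :=
  forall i j, (i < j)%nat -> (n i < n j)%nat.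

(** #{k : n_k <= N}.  For strictly increasing n we have k <= n_k, so only
    indices k <= N can contribute; we count over k = 0..N. *)
Fixpoint count_upto (n : nat -> nat) (N : nat) (K : nat) : nat :=
  match K with
  | O => if Nat.leb (n O) N then 1%nat else 0%nat
  | S K' => (count_upto n N K' + if Nat.leb (n K) N then 1 else 0)%nat
  end.

Definition counting (n : nat -> nat) (N : nat) : nat := count_upto n N N.

Definition density_zero (n : nat -> nat) : Prop :=
  Un_cv (fun N => INR (counting n N) / INR N) 0.

(** Suppose [T] is uniformly rigid along [n] but [n] does not have density
    zero, so [#{k : n_k <= N} >= δ N] for infinitely many [N].  Fix [r] with
    [r δ >= 2].  Because [μ] is nonatomic and [X] is compact, there are [r]
    Borel sets [A_0, ..., A_{r-1}] of positive measure that are pairwise more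
    than [γ] apart.  By ergodicity and invertibility a single point [z] visits
    every [A_i] in forward time, say [T^{p_i} z ∈ A_i].  For [k >= K] the map
    [T^{n_k}] moves every point by at most [γ/2], hence the integers
    [n_k + p_i] ([K <= k], [n_k <= N], [i < r]) are pairwise distinct; they all
    lie in [[0, N + max p]], so [r (δ N - K) <= N + max p + 1], which is false
    for large [N]. *)

From Stdlib Require Import Reals Lra Lia ZArith List Classical.
From Stdlib Require Import FunctionalExtensionality PropExtensionality IndefiniteDescription.
Open Scope R_scope.

Lemma pred_ext {X : Type} (P Q : X -> Prop) : (forall x, P x <-> Q x) -> P = Q.
Proof.
  intros H; apply functional_extensionality; intro x; apply propositional_extensionality; auto.
Qed.

Section BorelSets.
Context {X : Type}.
Variable d : X -> X -> R.

Lemma borel_open U : open_set d U -> borel d U.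
Proof. intros HU S HS HO; auto. Qed.

Lemma borel_full : borel d (fun _ => True).
Proof. intros S HS _; apply HS. Qed.

Lemma borel_compl A : borel d A -> borel d (fun x => ~ A x).
Proof. intros HA S HS HO; apply HS; apply HA; auto. Qed.

Lemma borel_countable_union (A : nat -> X -> Prop) :
  (forall k, borel d (A k)) -> borel d (fun x => exists k, A k x).
Proof. intros HA S HS HO; apply HS; intro k; apply HA; auto. Qed.

Lemma borel_ext A B : (forall x, A x <-> B x) -> borel d A -> borel d B.
Proof. intros H HA; rewrite <- (pred_ext A B H); auto. Qed.

Lemma borel_union A B : borel d A -> borel d B -> borel d (fun x => A x \/ B x).
Proof.
  intros HA HB.
  apply borel_ext with (fun x => exists k, (if Nat.eqb k 0 then A else B) x).
  - intro x; split.
    + intros [k Hk]; destruct (Nat.eqb k 0); auto.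
    + intros [H|H]; [exists 0%nat | exists 1%nat]; auto.
  - apply borel_countable_union; intro k; destruct (Nat.eqb k 0); auto.
Qed.

Lemma borel_inter A B : borel d A -> borel d B -> borel d (fun x => A x /\ B x).
Proof.
  intros HA HB. apply borel_ext with (fun x => ~ (~ A x \/ ~ B x)).
  - intro x; tauto.
  - apply borel_compl, borel_union; apply borel_compl; auto.
Qed.

Lemma borel_countable_inter (A : nat -> X -> Prop) :
  (forall k, borel d (A k)) -> borel d (fun x => forall k, A k x).
Proof.
  intro HA. apply borel_ext with (fun x => ~ exists k, ~ A k x).
  - intro x; split.
    + intros H k; apply NNPP; intro Hk; eauto.
    + intros H [k Hk]; auto.
  - apply borel_compl, borel_countable_union; intro k; apply borel_compl; auto.
Qed.

Lemma borel_empty : borel d (fun _ : X => False).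
Proof. apply borel_ext with (fun x => ~ True); [tauto | apply borel_compl, borel_full]. Qed.

Lemma borel_list_union {J} (B : J -> X -> Prop) (l : list J) :
  (forall j, In j l -> borel d (B j)) -> borel d (fun x => exists j, In j l /\ B j x).
Proof.
  intro HB. induction l as [|a l IH]; simpl.
  - apply borel_ext with (fun _ => False); [firstorder | apply borel_empty].
  - apply borel_ext with (fun x => B a x \/ exists j, In j l /\ B j x).
    + intro x; split.
      * intros [h|[j [h1 h2]]]; eauto.
      * intros [j [[E|h1] h2]]; [subst j|]; eauto.
    + apply borel_union; [apply HB; simpl; auto | apply IH; intros j Hj; apply HB; simpl; auto].
Qed.

End BorelSets.

Section ProbabilityMeasure.
Context {X : Type}.
Variables (d : X -> X -> R) (mu : (X -> Prop) -> R).
Hypothesis Hmu : borel_prob_measure d mu.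

Lemma mu_ext A B : (forall x, A x <-> B x) -> mu A = mu B.
Proof. intro H; rewrite (pred_ext A B H); auto. Qed.

Lemma mu_nonneg A : borel d A -> 0 <= mu A.
Proof. destruct Hmu as [H _]; auto. Qed.

Lemma mu_full : mu (fun _ => True) = 1.
Proof. destruct Hmu as [_ [H _]]; auto. Qed.

(** Countable additivity on the constant family [∅, ∅, ...] forces [μ ∅ = 0]. *)
Lemma mu_empty : mu (fun _ => False) = 0.
Proof.
  destruct Hmu as [_ [_ Hadd]].
  assert (Hsum := Hadd (fun _ _ => False) (fun _ => borel_empty d) (fun _ _ _ _ h _ => h)).
  cbv beta in Hsum.
  rewrite (mu_ext (fun x => exists _ : nat, False) (fun _ => False)) in Hsum by firstorder.
  set (m := mu (fun _ => False)) in *.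
  destruct (Req_dec m 0) as [E|E]; auto. exfalso.
  assert (Hm : 0 < Rabs m) by (apply Rabs_pos_lt; auto).
  destruct (Hsum (Rabs m) Hm) as [N HN].
  specialize (HN (S N) ltac:(lia)). unfold R_dist in HN.
  rewrite sum_cte in HN.
  replace (m * INR (S (S N)) - m) with (m * INR (S N)) in HN by (rewrite !S_INR; ring).
  rewrite Rabs_mult, (Rabs_right (INR (S N))) in HN by (apply Rle_ge, pos_INR).
  assert (1 <= INR (S N)) by (rewrite S_INR; generalize (pos_INR N); lra).
  nra.
Qed.

(** Finite additivity: countable additivity on the family [A, B, ∅, ∅, ...]. *)
Lemma mu_disjoint_union A B : borel d A -> borel d B -> (forall x, A x -> B x -> False) ->
  mu (fun x => A x \/ B x) = mu A + mu B.
Proof.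
  intros HA HB Hdisj. destruct Hmu as [_ [_ Hadd]].
  set (F := fun k => match k with 0%nat => A | 1%nat => B | _ => fun _ : X => False end).
  assert (HF : forall k, borel d (F k)) by (intros [|[|k]]; simpl; auto using borel_empty).
  assert (HFdisj : forall k m x, k <> m -> F k x -> F m x -> False).
  { intros [|[|k]] [|[|m]] x Hkm; simpl; try tauto; try (intros; eapply Hdisj; eauto); lia. }
  assert (Hsum := Hadd F HF HFdisj).
  rewrite (mu_ext (fun x => exists k, F k x) (fun x => A x \/ B x)) in Hsum.
  2:{ intro x; split.
      - intros [[|[|k]] Hk]; simpl in Hk; tauto.
      - intros [h|h]; [exists 0%nat | exists 1%nat]; auto. }
  apply (uniqueness_sum (fun k => mu (F k))); auto.
  intros eps Heps. exists 1%nat. intros k Hk. unfold R_dist.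
  replace (sum_f_R0 (fun k => mu (F k)) k) with (mu A + mu B).
  { rewrite Rminus_diag, Rabs_R0; auto. }
  induction k as [|k IH]; [lia|]. destruct k as [|k]; simpl; [ring|].
  simpl in IH. rewrite mu_empty, <- IH by lia. ring.
Qed.

Lemma mu_split A B : borel d A -> borel d B -> (forall x, A x -> B x) ->
  mu B = mu A + mu (fun x => B x /\ ~ A x).
Proof.
  intros HA HB Hsub.
  rewrite (mu_ext B (fun x => A x \/ (B x /\ ~ A x))) by (intro x; split; [tauto | firstorder]).
  apply mu_disjoint_union; auto.
  - apply borel_inter; auto; apply borel_compl; auto.
  - tauto.
Qed.

Lemma mu_mono A B : borel d A -> borel d B -> (forall x, A x -> B x) -> mu A <= mu B.
Proof.
  intros HA HB Hsub. rewrite (mu_split A B); auto.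
  generalize (mu_nonneg _ (borel_inter d _ _ HB (borel_compl d _ HA))); lra.
Qed.

Lemma mu_union_le A B : borel d A -> borel d B -> mu (fun x => A x \/ B x) <= mu A + mu B.
Proof.
  intros HA HB.
  assert (HBA : borel d (fun x => B x /\ ~ A x)) by (apply borel_inter; auto; apply borel_compl; auto).
  rewrite (mu_ext _ (fun x => A x \/ (B x /\ ~ A x))) by (intro; tauto).
  rewrite mu_disjoint_union; auto; [| tauto].
  apply Rplus_le_compat_l, mu_mono; auto; tauto.
Qed.

Lemma mu_compl A : borel d A -> mu (fun x => ~ A x) = 1 - mu A.
Proof.
  intro HA. rewrite <- mu_full.
  rewrite (mu_ext (fun _ => True) (fun x => A x \/ ~ A x)) by (intro; tauto).
  rewrite mu_disjoint_union; auto; [ring | apply borel_compl; auto].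
Qed.

Lemma mu_list_union_le {J} (B : J -> X -> Prop) (l : list J) c :
  (forall j, In j l -> borel d (B j) /\ mu (B j) <= c) ->
  mu (fun x => exists j, In j l /\ B j x) <= INR (length l) * c.
Proof.
  intros HB. induction l as [|j l IH]; cbn [length In].
  - rewrite (mu_ext (fun x => exists j, False /\ B j x) (fun _ => False)) by firstorder.
    rewrite mu_empty; simpl; lra.
  - assert (HBl : forall j', In j' l -> borel d (B j') /\ mu (B j') <= c) by (intros; apply HB; right; auto).
    destruct (HB j (or_introl eq_refl)) as [HBj Hcj].
    rewrite (mu_ext _ (fun x => B j x \/ exists j', In j' l /\ B j' x)).
    + eapply Rle_trans; [apply mu_union_le; auto; apply borel_list_union; apply HBl |].
      rewrite S_INR. specialize (IH HBl). lra.
    + intro x; split.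
      * intros [j' [[E|h1] h2]]; [subst j'|]; eauto.
      * intros [h|[j' [h1 h2]]]; eauto.
Qed.

Lemma full_measure_common_point (W : nat -> X -> Prop) r :
  (forall i, (i < r)%nat -> borel d (W i) /\ mu (W i) = 1) ->
  exists x, forall i, (i < r)%nat -> W i x.
Proof.
  intros HW. apply NNPP; intro Hnone.
  assert (Hnull : mu (fun x => exists i, In i (seq 0 r) /\ ~ W i x) <= INR r * 0).
  { replace (INR r) with (INR (length (seq 0 r))) by (rewrite length_seq; auto).
    apply mu_list_union_le. intros i Hi. apply in_seq in Hi.
    destruct (HW i ltac:(lia)) as [HWi H1].
    split; [apply borel_compl; auto | rewrite mu_compl, H1 by auto; lra]. }
  rewrite (mu_ext _ (fun _ => True)), mu_full in Hnull; [lra|].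
  intro y; split; auto. intros _. apply NNPP; intro Hy. apply Hnone. exists y. intros i Hi.
  apply NNPP; intro Hiy. apply Hy. exists i. split; auto. apply in_seq; lia.
Qed.

(** The differences [B_j \ B_(j+1)] partition [B_0] minus the
    intersection, and their partial sums are [μ B_0 - μ B_(J+1)]. *)
Lemma mu_decreasing_inter_lower_bound (B : nat -> X -> Prop) c :
  (forall j, borel d (B j)) -> (forall j x, B (S j) x -> B j x) ->
  (forall j, c <= mu (B j)) -> c <= mu (fun x => forall j, B j x).
Proof.
  intros HB Hdec Hc.
  assert (Hmono : forall j k x, (j <= k)%nat -> B k x -> B j x).
  { intros j k x Hjk. induction Hjk; auto. }
  set (Binf := fun x => forall j, B j x).
  assert (HBinf : borel d Binf) by (apply borel_countable_inter; auto).
  set (D := fun j x => B j x /\ ~ B (S j) x).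
  assert (HD : forall j, borel d (D j)) by (intro j; apply borel_inter; [| apply borel_compl]; auto).
  assert (HDdisj : forall j k x, j <> k -> D j x -> D k x -> False).
  { intros j k x Hjk [h1 h2] [h3 h4]. destruct (Nat.lt_ge_cases j k).
    - apply h2, (Hmono (S j) k); auto.
    - apply h4, (Hmono (S k) j); auto; lia. }
  assert (Hstep : forall j, mu (B j) = mu (B (S j)) + mu (D j)) by (intro; apply mu_split; auto).
  assert (Hpartial : forall J, sum_f_R0 (fun j => mu (D j)) J = mu (B 0%nat) - mu (B (S J))).
  { induction J as [|J IH]; simpl; [rewrite (Hstep 0%nat) | rewrite IH, (Hstep (S J))]; ring. }
  assert (Hunion : mu (fun x => exists j, D j x) = mu (B 0%nat) - mu Binf).
  { rewrite (mu_split Binf (B 0%nat)); auto.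
    - rewrite (mu_ext (fun x => exists j, D j x) (fun x => B 0%nat x /\ ~ Binf x)); [ring|].
      intro x; split.
      + intros [j [h1 h2]]. split; [apply (Hmono 0%nat j); auto; lia | intro h; apply h2, h].
      + intros [h0 hinf]. apply NNPP; intro hno. apply hinf. intro j.
        induction j as [|j IH]; auto. apply NNPP; intro h. apply hno; exists j; split; auto. }
  assert (Hsum := proj2 (proj2 Hmu) D HD HDdisj). rewrite Hunion in Hsum.
  apply Rnot_lt_le; intro Hlt.
  destruct (Hsum (c - mu Binf)) as [N HN]; [lra|].
  specialize (HN N (le_n N)). unfold R_dist in HN. rewrite Hpartial in HN.
  specialize (Hc (S N)). apply Rabs_def2 in HN. lra.
Qed.

End ProbabilityMeasure.

Section MetricBalls.
Context {X : Type}.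
Variable d : X -> X -> R.
Hypothesis Hd : is_metric d.

Definition ball (c : X) (r : R) : X -> Prop := fun y => d c y < r.

Lemma d_nonneg x y : 0 <= d x y. Proof. destruct Hd as [H _]; auto. Qed.
Lemma d_zero x y : d x y = 0 <-> x = y. Proof. destruct Hd as [_ [H _]]; auto. Qed.
Lemma d_sym x y : d x y = d y x. Proof. destruct Hd as [_ [_ [H _]]]; auto. Qed.
Lemma d_triangle x y z : d x z <= d x y + d y z. Proof. destruct Hd as [_ [_ [_ H]]]; auto. Qed.

Lemma d_pos x y : x <> y -> 0 < d x y.
Proof.
  intro Hxy. destruct (d_nonneg x y) as [h|h]; auto.
  symmetry in h; apply d_zero in h; contradiction.
Qed.

Lemma ball_center c r : 0 < r -> ball c r c.
Proof. intro Hr. unfold ball. rewrite (proj2 (d_zero c c) eq_refl); auto. Qed.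

Lemma ball_open c r : open_set d (ball c r).
Proof.
  intros y Hy. exists (r - d c y). split; unfold ball in *; [lra|].
  intros w Hw. generalize (d_triangle c y w); lra.
Qed.

Lemma borel_ball c r : borel d (ball c r).
Proof. apply borel_open, ball_open. Qed.

End MetricBalls.

Definition rad (j : nat) : R := / (INR j + 1).

Lemma rad_pos j : 0 < rad j.
Proof. unfold rad. apply Rinv_0_lt_compat. generalize (pos_INR j); lra. Qed.

Lemma rad_antitone j k : (j <= k)%nat -> rad k <= rad j.
Proof.
  intro H. unfold rad. apply Rinv_le_contravar; [generalize (pos_INR j); lra|].
  apply le_INR in H; lra.
Qed.

Lemma rad_small e : 0 < e -> exists j, rad j <= e.
Proof.
  intro He. destruct (archimed (/ e)) as [Hup _].
  assert (Hpos : (0 <= up (/ e))%Z) by (apply le_IZR; generalize (Rinv_0_lt_compat _ He); lra).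
  exists (Z.to_nat (up (/ e))). unfold rad.
  rewrite INR_IZR_INZ, Z2Nat.id by auto.
  apply Rle_trans with (/ / e); [| rewrite Rinv_inv; lra].
  apply Rinv_le_contravar; [apply Rinv_0_lt_compat; auto | lra].
Qed.

Lemma le_list_max (l : list nat) x : In x l -> (x <= list_max l)%nat.
Proof.
  intro Hx. assert (Hall := proj1 (list_max_le l (list_max l)) (le_n _)).
  rewrite Forall_forall in Hall. auto.
Qed.

Section NonatomicCompact.
Context {X : Type}.
Variables (d : X -> X -> R) (mu : (X -> Prop) -> R).
Hypothesis Hmu : borel_prob_measure d mu.
Hypothesis Hd : is_metric d.
Hypothesis Hna : nonatomic mu.
Hypothesis Hcpt : compact_space d.

(** The balls [B(z, 1/(j+1))] decrease to [{z}], which is null. *)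
Lemma small_ball_at z c : 0 < c -> exists j, mu (ball d z (rad j)) < c.
Proof.
  intro Hc. apply NNPP; intro Hnone.
  assert (Hdec : forall j x, ball d z (rad (S j)) x -> ball d z (rad j) x).
  { intros j x. unfold ball. generalize (rad_antitone j (S j) (Nat.le_succ_diag_r j)); lra. }
  assert (Hlow : forall j, c <= mu (ball d z (rad j))).
  { intro j. apply Rnot_lt_le; intro h; apply Hnone; eauto. }
  assert (Hinf := mu_decreasing_inter_lower_bound d mu Hmu (fun j => ball d z (rad j)) c
                    (fun j => borel_ball d Hd z (rad j)) Hdec Hlow).
  rewrite (mu_ext mu _ (fun x => x = z)), Hna in Hinf; [lra|].
  intro x; split; [| intros -> j; apply ball_center, rad_pos; auto].
  intro Hx. apply NNPP; intro Hxz.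
  destruct (rad_small (d z x)) as [j Hj]; [apply d_pos; auto|].
  specialize (Hx j). unfold ball in Hx. lra.
Qed.

(** Every sequence in a compact metric space has a cluster point: otherwise
    the balls around each point that eventually avoid the sequence cover [X],
    and a finite subcover would have to contain a late term of it. *)
Lemma cluster_point (xs : nat -> X) :
  exists z, forall e, 0 < e -> forall K, exists k, (K <= k)%nat /\ d z (xs k) < e.
Proof.
  apply NNPP; intro Hnone.
  assert (Hfar : forall z, exists e, 0 < e /\ exists K, forall k, (K <= k)%nat -> e <= d z (xs k)).
  { intro z. apply NNPP; intro h. apply Hnone. exists z. intros e He K. apply NNPP; intro h2.
    apply h. exists e. split; auto. exists K. intros k Hk. apply Rnot_lt_le. intro h3. apply h2; eauto. }
  set (I := {p : X * R * nat |
               0 < snd (fst p) /\ forall k, (snd p <= k)%nat -> snd (fst p) <= d (fst (fst p)) (xs k)}).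
  set (U := fun i : I => ball d (fst (fst (proj1_sig i))) (snd (fst (proj1_sig i)))).
  destruct (Hcpt I U) as [l Hl].
  - intro i; apply ball_open; auto.
  - intro x. destruct (Hfar x) as [e [He [K HK]]].
    exists (exist _ (x, e, K) (conj He HK)). apply ball_center; auto.
  - set (Kmax := list_max (map (fun i => snd (proj1_sig i)) l)).
    assert (HKmax : forall i, In i l -> (snd (proj1_sig i) <= Kmax)%nat).
    { intros i Hi. apply le_list_max, (in_map (fun i : I => snd (proj1_sig i))); auto. }
    destruct (Hl (xs Kmax)) as [i [Hi HU]]. specialize (HKmax _ Hi). clear Hi.
    destruct i as [[[z e] K] [He HK]]. unfold U, ball in HU; simpl in *.
    specialize (HK Kmax HKmax). lra.
Qed.

(** Otherwise centres of bad balls of radii [1/(j+1)]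
    accumulate at a point [z], and a small ball at [z] would contain one of
    them. *)
Lemma uniformly_small_balls c : 0 < c -> exists eta, 0 < eta /\ forall x, mu (ball d x eta) < c.
Proof.
  intro Hc. apply NNPP; intro Hnone.
  assert (Hbad : forall j, exists x, c <= mu (ball d x (rad j))).
  { intro j. apply NNPP; intro h. apply Hnone. exists (rad j). split; [apply rad_pos|].
    intro x. apply Rnot_le_lt. intro h2; apply h; eauto. }
  destruct (functional_choice _ Hbad) as [xs Hxs].
  destruct (cluster_point xs) as [z Hz].
  destruct (small_ball_at z c Hc) as [j Hj].
  assert (Hhalf : 0 < rad j / 2) by (generalize (rad_pos j); lra).
  destruct (rad_small _ Hhalf) as [K HK].
  destruct (Hz _ Hhalf K) as [k [Hk Hzk]].
  assert (Hincl : mu (ball d (xs k) (rad k)) <= mu (ball d z (rad j))).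
  { apply (mu_mono d mu Hmu); [apply borel_ball; auto | apply borel_ball; auto |].
    intros y Hy. unfold ball in *. generalize (d_triangle d Hd z (xs k) y) (rad_antitone K k Hk). lra. }
  specialize (Hxs k). lra.
Qed.

(** A set of positive measure meets some [ρ]-ball in positive measure,
    since finitely many [ρ]-balls cover [X]. *)
Lemma positive_local_piece Y rho : borel d Y -> 0 < mu Y -> 0 < rho ->
  exists z, 0 < mu (fun y => ball d z rho y /\ Y y).
Proof.
  intros HY Hpos Hrho.
  destruct (Hcpt X (fun z => ball d z rho)) as [l Hl].
  - intro; apply ball_open; auto.
  - intro x. exists x. apply ball_center; auto.
  - apply NNPP; intro Hnone.
    assert (Hpiece : forall z, borel d (fun y => ball d z rho y /\ Y y)).
    { intro; apply borel_inter; auto; apply borel_ball; auto. }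
    assert (Hcover : mu Y <= mu (fun x => exists z, In z l /\ (ball d z rho x /\ Y x))).
    { apply (mu_mono d mu Hmu); auto.
      - apply borel_list_union; auto.
      - intros x hx. destruct (Hl x) as [z [hz1 hz2]]. eauto. }
    assert (Hnull : mu (fun x => exists z, In z l /\ (ball d z rho x /\ Y x)) <= INR (length l) * 0).
    { apply (mu_list_union_le d mu Hmu). intros z _. split; auto.
      apply Rnot_lt_le; intro; apply Hnone; eauto. }
    lra.
Qed.

Lemma prob_space_inhabited : inhabited X.
Proof.
  apply NNPP; intro Hempty.
  assert (Hsame : mu (fun _ => True) = mu (fun _ => False)).
  { apply mu_ext. intro x. exfalso. exact (Hempty (inhabits x)). }
  rewrite (mu_full d mu Hmu), (mu_empty d mu Hmu) in Hsame. lra.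
Qed.

(** Invariant of the construction of separated sets: [A_0, ..., A_(k-1)]
    have positive measure, [A_i] lies in [B(cs_i, η/4)], and a later [A_j]
    avoids the ball [B(cs_i, η)]. *)
Definition centred_family (eta : R) (k : nat) (A : nat -> X -> Prop) (cs : nat -> X) : Prop :=
  (forall i, (i < k)%nat -> borel d (A i) /\ 0 < mu (A i) /\ forall u, A i u -> d (cs i) u < eta / 4) /\
  (forall i j v, (i < j)%nat -> (j < k)%nat -> A j v -> eta <= d (cs i) v).

(** If all [η]-balls have measure [< c] and [k c < 1], a centred family of
    [k] sets exists: the [k - 1] previous [η]-balls leave a set [Y] of
    positive measure, and a piece of [Y] in a small ball is the next set. *)
Lemma centred_family_exists eta c k : 0 < eta -> (forall x, mu (ball d x eta) < c) ->
  INR k * c < 1 -> exists A cs, centred_family eta k A cs.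
Proof.
  intros Heta Hsmall. destruct prob_space_inhabited as [x0].
  induction k as [|k IH]; intro Hk.
  - exists (fun _ _ => False), (fun _ => x0). split; intros; lia.
  - rewrite S_INR in Hk.
    assert (Hc : 0 <= c) by (apply Rle_trans with (mu (ball d x0 eta));
                             [apply (mu_nonneg d mu Hmu), borel_ball | apply Rlt_le]; auto).
    destruct IH as [A [cs [Hsets Hfar]]]; [lra|].
    set (Y := fun y => ~ exists i, In i (seq 0 k) /\ ball d (cs i) eta y).
    assert (HYb : borel d Y) by (apply borel_compl, borel_list_union; intros; apply borel_ball; auto).
    assert (HY : 0 < mu Y).
    { unfold Y. rewrite (mu_compl d mu Hmu) by (apply borel_list_union; intros; apply borel_ball; auto).
      assert (Hballs := mu_list_union_le d mu Hmu (fun i => ball d (cs i) eta) (seq 0 k) c).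
      rewrite length_seq in Hballs.
      enough (mu (fun x => exists i, In i (seq 0 k) /\ ball d (cs i) eta x) <= INR k * c) by lra.
      apply Hballs. intros i _. split; [apply borel_ball; auto | apply Rlt_le; auto]. }
    destruct (positive_local_piece Y (eta / 4) HYb HY) as [z Hz]; [lra|].
    exists (fun i => if Nat.eqb i k then (fun y => ball d z (eta / 4) y /\ Y y) else A i).
    exists (fun i => if Nat.eqb i k then z else cs i).
    split.
    + intros i Hi. destruct (Nat.eqb_spec i k).
      * split; [apply borel_inter; auto; apply borel_ball; auto|]. split; auto. intros u [hu _]; exact hu.
      * apply Hsets; lia.
    + intros i j v Hij Hjk. destruct (Nat.eqb_spec i k); [lia|]. destruct (Nat.eqb_spec j k).
      * intros [_ hY]. apply Rnot_lt_le. intro h. apply hY. exists i. split; auto. apply in_seq; lia.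
      * apply Hfar; lia.
Qed.

Lemma centred_family_separated eta k A cs : 0 < eta -> centred_family eta k A cs ->
  forall i j u v, (i < k)%nat -> (j < k)%nat -> i <> j -> A i u -> A j v -> eta / 2 < d u v.
Proof.
  intros Heta [Hsets Hfar].
  assert (Hlt : forall i j u v, (i < j)%nat -> (j < k)%nat -> A i u -> A j v -> eta / 2 < d u v).
  { intros i j u v Hij Hj hu hv. destruct (Hsets i ltac:(lia)) as [_ [_ Hnear]].
    specialize (Hnear u hu). specialize (Hfar i j v Hij Hj hv).
    generalize (d_triangle d Hd (cs i) u v). lra. }
  intros i j u v Hi Hj Hij hu hv. destruct (Nat.lt_ge_cases i j).
  - eapply Hlt; eauto.
  - rewrite (d_sym d Hd u v). apply (Hlt j i v u); auto. lia.
Qed.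

Lemma separated_sets r : exists gam, 0 < gam /\ exists A : nat -> X -> Prop,
  (forall i, (i < r)%nat -> borel d (A i) /\ 0 < mu (A i)) /\
  (forall i j u v, (i < r)%nat -> (j < r)%nat -> i <> j -> A i u -> A j v -> gam < d u v).
Proof.
  set (c := / (INR r + 1)).
  assert (Hr : 0 < INR r + 1) by (generalize (pos_INR r); lra).
  assert (Hc : 0 < c) by (apply Rinv_0_lt_compat; auto).
  assert (Hrc : INR r * c < 1).
  { apply Rmult_lt_reg_r with (INR r + 1); auto. unfold c. rewrite Rmult_assoc, Rinv_l; lra. }
  destruct (uniformly_small_balls c Hc) as [eta [Heta Hsmall]].
  destruct (centred_family_exists eta c r Heta Hsmall Hrc) as [A [cs Hfam]].
  exists (eta / 2). split; [lra|]. exists A. split.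
  - intros i Hi. destruct (proj1 Hfam i Hi) as [Hb [Hpos _]]; auto.
  - apply (centred_family_separated eta r A cs Heta Hfam).
Qed.

End NonatomicCompact.

Section Dynamics.
Context {X : Type}.
Variables (d : X -> X -> R) (mu : (X -> Prop) -> R) (T Tinv : X -> X).
Hypothesis Hmu : borel_prob_measure d mu.
Hypothesis HTmeas : measurable_map d T.
Hypothesis HTinv_meas : measurable_map d Tinv.
Hypothesis HTinv_T : forall x, Tinv (T x) = x.
Hypothesis HT_Tinv : forall x, T (Tinv x) = x.
Hypothesis Herg : ergodic d mu T.

Lemma iter_measurable f : measurable_map d f -> forall a, measurable_map d (Nat.iter a f).
Proof.
  intros Hf a. induction a as [|a IH]; intros A HA; simpl; auto.
  apply (IH (fun u => A (f u))), Hf; auto.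
Qed.

Definition orbit_hits (A : X -> Prop) (y : X) : Prop :=
  exists a b, A (Nat.iter a T (Nat.iter b Tinv y)).

Lemma orbit_hits_invariant A y : orbit_hits A (T y) <-> orbit_hits A y.
Proof.
  split.
  - intros [a [[|b] Hab]].
    + exists (S a), 0%nat. change (A (Nat.iter (S a) T y)). rewrite Nat.iter_succ_r. exact Hab.
    + exists a, b. rewrite Nat.iter_succ_r, HTinv_T in Hab. auto.
  - intros [a [b Hab]]. exists a, (S b). rewrite Nat.iter_succ_r, HTinv_T. auto.
Qed.

Lemma borel_orbit_hits A : borel d A -> borel d (orbit_hits A).
Proof.
  intro HA. apply borel_countable_union; intro a. apply borel_countable_union; intro b.
  apply (iter_measurable Tinv HTinv_meas b (fun u => A (Nat.iter a T u))).
  apply iter_measurable; auto.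
Qed.

Lemma orbit_hits_full A : borel d A -> 0 < mu A -> mu (orbit_hits A) = 1.
Proof.
  intros HA Hpos.
  destruct (Herg (orbit_hits A) (borel_orbit_hits A HA) (orbit_hits_invariant A)) as [Hnull|Hfull]; auto.
  exfalso. assert (mu A <= mu (orbit_hits A)); [|lra].
  apply (mu_mono d mu Hmu); auto using borel_orbit_hits.
  intros y Hy. exists 0%nat, 0%nat. exact Hy.
Qed.

Lemma iter_back_forth c b x : Nat.iter c T (Nat.iter (c + b) Tinv x) = Nat.iter b Tinv x.
Proof.
  revert b x. induction c as [|c IH]; intros b x; auto.
  rewrite Nat.iter_succ_r. simpl (S c + b)%nat. rewrite Nat.iter_succ, HT_Tinv. auto.
Qed.

(** A common point of the orbit saturations visits [A_i] at times
    [a_i - b_i]; moving it back by [max b_i] makes all times nonnegative. *)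
Lemma common_forward_visits (A : nat -> X -> Prop) r :
  (forall i, (i < r)%nat -> borel d (A i) /\ 0 < mu (A i)) ->
  exists z (p : nat -> nat), forall i, (i < r)%nat -> A i (Nat.iter (p i) T z).
Proof.
  intro HA.
  destruct (full_measure_common_point d mu Hmu (fun i => orbit_hits (A i)) r) as [x Hx].
  { intros i Hi. destruct (HA i Hi). split; [apply borel_orbit_hits | apply orbit_hits_full]; auto. }
  assert (Htimes : forall i, exists ab : nat * nat,
             (i < r)%nat -> A i (Nat.iter (fst ab) T (Nat.iter (snd ab) Tinv x))).
  { intro i. destruct (Nat.lt_ge_cases i r) as [Hi|Hi].
    - destruct (Hx i Hi) as [a [b Hab]]. exists (a, b). auto.
    - exists (0, 0)%nat. lia. }
  destruct (functional_choice _ Htimes) as [ab Hab].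
  set (B := list_max (map (fun i => snd (ab i)) (seq 0 r))).
  exists (Nat.iter B Tinv x), (fun i => fst (ab i) + (B - snd (ab i)))%nat.
  intros i Hi. rewrite Nat.iter_add.
  assert (HbB : (snd (ab i) <= B)%nat).
  { apply le_list_max, (in_map (fun i => snd (ab i))), in_seq; lia. }
  replace (Nat.iter B Tinv x) with (Nat.iter (B - snd (ab i) + snd (ab i)) Tinv x) by (f_equal; lia).
  rewrite iter_back_forth. apply Hab; auto.
Qed.

End Dynamics.

(** If [T^{m_1}] and [T^{m_2}] move points by at most [γ/2], then
    [m_1 + q_1 = m_2 + q_2] would put [T^{q_1} z] and [T^{q_2} z] within [γ]
    of each other. *)
Lemma rigid_translates_distinct {X : Type} (d : X -> X -> R) (T : X -> X) gam z m1 m2 q1 q2 :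
  is_metric d ->
  (forall u, d (Nat.iter m1 T u) u <= gam / 2) -> (forall u, d (Nat.iter m2 T u) u <= gam / 2) ->
  gam < d (Nat.iter q1 T z) (Nat.iter q2 T z) -> (m1 + q1 <> m2 + q2)%nat.
Proof.
  intros Hd Hm1 Hm2 Hfar E.
  assert (H1 := Hm1 (Nat.iter q1 T z)). assert (H2 := Hm2 (Nat.iter q2 T z)).
  rewrite <- Nat.iter_add in H1, H2. rewrite E in H1.
  assert (Htri := d_triangle d Hd (Nat.iter q1 T z) (Nat.iter (m2 + q2) T z) (Nat.iter q2 T z)).
  rewrite (d_sym d Hd (Nat.iter q1 T z) (Nat.iter (m2 + q2) T z)) in Htri. lra.
Qed.

Lemma NoDup_flat_map {I B} (f : I -> list B) (l : list I) :
  NoDup l -> (forall i, In i l -> NoDup (f i)) ->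
  (forall i j x, In i l -> In j l -> i <> j -> In x (f i) -> In x (f j) -> False) ->
  NoDup (flat_map f l).
Proof.
  induction l as [|a l IH]; simpl; intros Hl Hf Hdisj; [constructor|].
  inversion Hl; subst. apply NoDup_app.
  - auto.
  - apply IH; auto. intros i j x hi hj; apply Hdisj; auto.
  - intros y hy hy2. apply in_flat_map in hy2. destruct hy2 as [j [hj hyj]].
    apply (Hdisj a j y); auto. intro E; subst; auto.
Qed.

Lemma strictly_increasing_monotone n : strictly_increasing n ->
  forall i j, (i <= j)%nat -> (n i <= n j)%nat.
Proof.
  intros H i j Hij. destruct (Nat.eq_dec i j); [subst; lia|].
  specialize (H i j ltac:(lia)); lia.
Qed.

Lemma count_upto_le n N M : (count_upto n N M <= S M)%nat.
Proof.
  induction M as [|M IH]; simpl; [destruct (Nat.leb (n 0%nat) N) | destruct (Nat.leb (n (S M)) N)]; lia.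
Qed.

Lemma count_upto_prefix n N M : strictly_increasing n ->
  forall k, (k < count_upto n N M)%nat -> (n k <= N)%nat.
Proof.
  intro Hs. induction M as [|M IH]; simpl; intros k Hk.
  - destruct (Nat.leb_spec (n 0%nat) N); [|lia]. replace k with 0%nat by lia; auto.
  - destruct (Nat.leb_spec (n (S M)) N) as [HM|HM]; [|apply IH; lia].
    destruct (Nat.lt_ge_cases k (count_upto n N M)) as [Hk'|Hk']; auto.
    assert (HkM : (k <= S M)%nat) by (generalize (count_upto_le n N M); lia).
    generalize (strictly_increasing_monotone n Hs k (S M) HkM); lia.
Qed.

Lemma translates_count_bound (n p : nat -> nat) r K N P c :
  strictly_increasing n -> (forall k, (k < c)%nat -> (n k <= N)%nat) ->
  (forall i, (i < r)%nat -> (p i <= P)%nat) ->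
  (forall i j k1 k2, (i < r)%nat -> (j < r)%nat -> i <> j -> (K <= k1)%nat -> (K <= k2)%nat ->
     n k1 + p i <> n k2 + p j)%nat ->
  (r * (c - K) <= N + P + 1)%nat.
Proof.
  intros Hs Hc Hp Hdist.
  set (row := fun i => map (fun k => n k + p i)%nat (seq K (c - K))).
  set (L := flat_map row (seq 0 r)).
  assert (HL : length L = (r * (c - K))%nat).
  { unfold L. rewrite (flat_map_constant_length (c := (c - K)%nat)); [rewrite length_seq; auto|].
    intros; unfold row; rewrite length_map, length_seq; auto. }
  rewrite <- HL. replace (N + P + 1)%nat with (length (seq 0 (N + P + 1))) by apply length_seq.
  apply NoDup_incl_length.
  - apply NoDup_flat_map; [apply seq_NoDup | |].
    + intros i _. apply NoDup_map_NoDup_ForallPairs; [|apply seq_NoDup].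
      intros a b _ _ E. destruct (Nat.lt_total a b) as [h|[h|h]]; auto; apply Hs in h; lia.
    + intros i j x hi hj hij hx1 hx2. unfold row in *. apply in_map_iff in hx1, hx2.
      destruct hx1 as [k1 [E1 h1]]. destruct hx2 as [k2 [E2 h2]]. apply in_seq in h1, h2, hi, hj.
      apply (Hdist i j k1 k2); lia.
  - intros x hx. apply in_flat_map in hx. destruct hx as [i [hi hx]].
    apply in_map_iff in hx. destruct hx as [k [E hk]]. apply in_seq in hk, hi. apply in_seq.
    specialize (Hc k ltac:(lia)). specialize (Hp i ltac:(lia)). lia.
Qed.

Lemma positive_upper_density n : ~ density_zero n ->
  exists del, 0 < del /\ forall N0, exists N, (N0 <= N)%nat /\ del * INR N <= INR (counting n N).
Proof.
  intro Hnz. apply NNPP; intro Hnone. apply Hnz. intros eps Heps.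
  apply NNPP; intro Hnot. apply Hnone. exists eps. split; auto.
  intro N0. apply NNPP; intro Hsmall. apply Hnot. exists (S N0). intros N HN.
  unfold R_dist. rewrite Rminus_0_r.
  assert (HNpos : 0 < INR N) by (apply lt_0_INR; lia).
  assert (Hlt : INR (counting n N) < eps * INR N).
  { apply Rnot_le_lt. intro h. apply Hsmall. exists N. split; [lia | lra]. }
  rewrite Rabs_right.
  - apply Rmult_lt_reg_r with (INR N); auto. unfold Rdiv. rewrite Rmult_assoc, Rinv_l; lra.
  - apply Rle_ge. unfold Rdiv. apply Rmult_le_pos; [apply pos_INR | left; apply Rinv_0_lt_compat; auto].
Qed.

Lemma multiple_ge_two del : 0 < del -> exists r : nat, 2 <= INR r * del.
Proof.
  intro Hdel. destruct (rad_small (del / 2)) as [j Hj]; [lra|].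
  exists (S j). unfold rad in Hj. rewrite S_INR.
  assert (Hj1 : 0 < INR j + 1) by (generalize (pos_INR j); lra).
  apply Rmult_le_compat_l with (r := INR j + 1) in Hj; [|lra].
  rewrite Rinv_r in Hj; lra.
Qed.

Lemma counting_contradiction del r K N P c :
  2 <= INR r * del -> del * INR N <= INR c -> (r * K + P + 2 <= N)%nat ->
  (r * (c - K) <= N + P + 1)%nat -> False.
Proof.
  intros Hr Hc HN Hcount.
  assert (Hnat : (r * c <= N + P + 1 + r * K)%nat) by nia.
  apply le_INR in Hnat, HN. rewrite !plus_INR, !mult_INR in Hnat. rewrite !plus_INR, !mult_INR in HN.
  simpl INR in HN, Hnat.
  assert (HrN : 2 * INR N <= INR r * del * INR N) by (apply Rmult_le_compat_r; auto; apply pos_INR).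
  assert (Hrc : INR r * (del * INR N) <= INR r * INR c) by (apply Rmult_le_compat_l; auto; apply pos_INR).
  lra.
Qed.

Theorem proposition4p1 (X : Type) (d : X -> X -> R) (mu : (X -> Prop) -> R)
  (T : X -> X) (n : nat -> nat) :
  is_metric d -> compact_space d ->
  borel_prob_measure d mu -> nonatomic mu ->
  invertible_mpt d mu T -> ergodic d mu T ->
  strictly_increasing n -> uniformly_rigid d T n ->
  density_zero n.
Proof.
  intros Hd Hcpt Hmu Hna [[HTmeas _] [Tinv [HTinv_T [HT_Tinv [HTinv_meas _]]]]] Herg Hs Hrig.
  apply NNPP; intro Hnz.
  destruct (positive_upper_density n Hnz) as [del [Hdel Hfreq]].
  destruct (multiple_ge_two del Hdel) as [r Hr].
  destruct (separated_sets d mu Hmu Hd Hna Hcpt r) as [gam [Hgam [A [HA Hsep]]]].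
  destruct (Hrig (gam / 2) ltac:(lra)) as [K HK].
  destruct (common_forward_visits d mu T Tinv Hmu HTmeas HTinv_meas HTinv_T HT_Tinv Herg A r HA)
    as [z [p Hp]].
  set (P := list_max (map p (seq 0 r))).
  destruct (Hfreq (r * K + P + 2)%nat) as [N [HN HcN]].
  apply (counting_contradiction del r K N P (counting n N)); auto.
  apply (translates_count_bound n p r K N P); auto.
  - apply count_upto_prefix; auto.
  - intros i Hi. apply le_list_max, in_map, in_seq. lia.
  - intros i j k1 k2 Hi Hj Hij Hk1 Hk2.
    apply (rigid_translates_distinct d T gam z); auto.
    apply (Hsep i j); auto.
Qed.
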